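(* Let $G=(N,A)$ be an asymmetric directed graph on $n$ vertices and consider the simple asymmetric fractional hedonic game it induces. Every sequence of IS deviations starting from the singleton partition is finite if and only if $G$ is acyclic. Moreover, if $G$ is acyclic, every such sequence has length $\mathcal O(n^4)$.
   Context: A fractional hedonic game (FHG) on agents $N$ is given by utility functions $v_i:N\to\mathbb R$ with $v_i(i)=0$; agent $i$'s utility for a coalition $C\ni i$ is $\frac{1}{|C|}\sum_{j\in C}v_i(j)$. A simple asymmetric FHG is one with $v_i(j)\in\{0,1\}$ and $v_i(j)=1\Rightarrow v_j(i)=0$; it is induced by the asymmetric digraph with arc $(i,j)$ iff $v_i(j)=1$. The singleton partition is $\{\{i\}:i\in N\}$. An IS deviation of agent $i$ from partition $\pi$ to $\pi'$ is a move of $i$ alone from $\pi(i)$ into another coalition of $\pi$ or into a new singleton such that $i$ strictly prefers $\pi'(i)$ to $\pi(i)$ and every $j\in\pi'(i)\setminus\{i\}$ weakly prefers $\pi'(j)$ to $\pi(j)$. *)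

From mathcomp Require Import all_boot all_order all_algebra.
Set Implicit Arguments. Unset Strict Implicit. Unset Printing Implicit Defensive.
Import Order.TTheory GRing.Theory Num.Theory.

Section FHG.
Variable T : finType.

Definition asymmetric (arc : rel T) : Prop := forall i j, arc i j -> ~~ arc j i.

Definition acyclic (arc : rel T) : Prop :=
  forall (x : T) (p : seq T), p != [::] -> path arc x p -> last x p != x.

(* Utility of agent i for coalition C in the induced simple asymmetric FHG:
   v_i(j) = 1 iff arc i j, utility = (1/|C|) * sum_{j in C} v_i(j). *)
Definition util (arc : rel T) (i : T) (C : {set T}) : rat :=
  (#|[set j in C | arc i j]|%:R / #|C|%:R)%R.

(* partitions are sets of coalitions; pi(i) = pblock P i *)
Definition singleton_partition : {set {set T}} := [set [set x] | x : T].

(* The partition obtained from P when agent i leaves its coalition and joins C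
   (C an existing coalition, or C = set0 meaning a new singleton). *)
Definition move (P : {set {set T}}) (i : T) (C : {set T}) : {set {set T}} :=
  let B := pblock P i in
  ((P :\ B) :\ C) :|: (if B :\ i == set0 then set0 else [set B :\ i])
    :|: [set i |: C].

Definition IS_dev (arc : rel T) (P P' : {set {set T}}) : Prop :=
  exists (i : T) (C : {set T}),
    ((C \in P /\ C != pblock P i) \/ C = set0) /\
    P' = move P i C /\
    (util arc i (pblock P i) < util arc i (i |: C))%R /\
    (forall j, j \in C -> (util arc j C <= util arc j (i |: C))%R).

Definition IS_seq (arc : rel T) (s : seq {set {set T}}) : Prop :=
  forall k, k < size s ->
    IS_dev arc (nth singleton_partition (singleton_partition :: s) k)
               (nth singleton_partition s k).

End FHG.

From mathcomp Require Import all_boot all_order all_algebra.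
From mathcomp Require Import zify.
Set Implicit Arguments. Unset Strict Implicit. Unset Printing Implicit Defensive.
Import Order.TTheory GRing.Theory Num.Theory.

(* Along IS deviations from the singleton partition every coalition stays a
   tournament.  An agent i joining a coalition C must like some s in C; a member
   of C that does not like i gains a larger coalition but no liked agent, so it
   likes nobody in C.  Since s does not like i, s is such a member, and in a
   tournament no other member can be one: everybody else in C likes i.

   For acyclic G, let the height of a coalition be one more than the largest
   number of proper ancestors of one of its members, and take the potential
   sum_X (2n * height X + |X|^2).  Joining C keeps its height, i being an
   ancestor of s.  If i liked somebody in its old coalition B, utilities give
   |C| + 1 < |B|, so the squares decrease; otherwise everybody in B likes i and
   the height of B drops, which outweighs the growth 2|C| + 1 < 2n of |C|^2.
   The initial potential is at most 3n^4.

   Conversely, along a cycle a_0 -> a_1 -> ... agent a_k leaves the pair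
   {a_(k-1), a_k}, in which it likes nobody, for the singleton {a_(k+1)},
   forever. *)

Section BlockMaps.
Variable T : finType.

Record block_map (g : T -> {set T}) : Prop := BlockMap {
  block_mem : forall v, v \in g v;
  block_eq : forall u v, u \in g v -> g u = g v }.

Definition partition_of (g : T -> {set T}) := [set g v | v : T].

Definition move_map (g : T -> {set T}) i (C : {set T}) v :=
  if (v == i) || (v \in C) then i |: C else if v \in g i then g i :\ i else g v.

Lemma block_map_set1 : block_map (fun v => [set v]).
Proof. by split=> [v | u v /set1P ->]; rewrite ?set11. Qed.

Lemma sum_move_le (F : {set T} -> nat) P i C :
  pblock P i \in P -> C \in P :\ pblock P i ->
  \sum_(X in move P i C) F X + F (pblock P i) + F C <=
  \sum_(X in P) F X + F (pblock P i :\ i) + F (i |: C).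
Proof.
set B := pblock P i => BP CP.
have sum_setU1 (A : {set {set T}}) (x : {set T}) :
    \sum_(X in A :|: [set x]) F X <= \sum_(X in A) F X + F x.
  rewrite setUC; have [xA | xA] := boolP (x \in A); last by rewrite big_setU1 // addnC.
  by rewrite (setUidPr _) ?sub1set ?leq_addr.
have sumP : \sum_(X in P) F X = F B + F C + \sum_(X in P :\ B :\ C) F X.
  by rewrite (big_setD1 B BP) (big_setD1 C CP) /= addnA.
set O := if B :\ i == set0 then set0 else [set B :\ i].
have sum_rest :
    \sum_(X in P :\ B :\ C :|: O) F X <= \sum_(X in P :\ B :\ C) F X + F (B :\ i).
  by rewrite /O; case: ifP => _; rewrite ?setU0 ?leq_addr ?sum_setU1.
move: (sum_setU1 (P :\ B :\ C :|: O) (i |: C)) sum_rest.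
rewrite /move -/B -/O sumP.
(* [set] identifies the two elaborations of this sum, which [lia] would keep apart. *)
set S1 := \sum_(X in _ :|: [set i |: C]) F X; lia.
Qed.

Variable g : T -> {set T}.
Hypothesis gP : block_map g.

Lemma mem_block u v : (u \in g v) = (g u == g v).
Proof. by apply/idP/eqP => [/(block_eq gP) // | <-]; apply: block_mem. Qed.

Lemma pblock_partition_of x : pblock (partition_of g) x = g x.
Proof.
have xP : x \in cover (partition_of g).
  by apply/bigcupP; exists (g x); [apply: imset_f | apply: block_mem].
have /imsetP [v _ Ev] := pblock_mem xP.
by move: xP; rewrite -mem_pblock Ev mem_block => /eqP.
Qed.

Lemma move_partition_of i c : i \notin g c ->
  move (partition_of g) i (g c) = partition_of (move_map g i (g c)).
Proof.
rewrite mem_block => ic; rewrite /move pblock_partition_of /move_map.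
apply/setP => X; apply/idP/imsetP => [|[v _ ->]].
- rewrite !inE => /orP [/orP [/and3P [XC XB /imsetP [u _ EX]] | ] | /eqP ->].
  + subst X; exists u => //; rewrite !mem_block (negbTE XC) (negbTE XB) orbF.
    by case: eqP => // ui; rewrite ui eqxx in XB.
  + case: ifP => [_ | /set0Pn [v]]; rewrite !inE // => /andP [vi vgi] /eqP ->.
    exists v => //; rewrite (negbTE vi) vgi /= !mem_block.
    by move: vgi; rewrite mem_block => /eqP ->; rewrite (negbTE ic).
  + by exists i; rewrite ?eqxx.
- case: ifP => [_ | vNiC]; first by rewrite !inE eqxx orbT.
  have [vi vc] : v != i /\ v \notin g c by apply/norP; rewrite vNiC.
  case: ifP => vgi.
    case: ifP => [/eqP Bi | _]; last by rewrite !inE eqxx orbT.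
    by move: vgi; rewrite -(setD1K (block_mem gP i)) Bi setU0 inE (negbTE vi).
  rewrite !inE imset_f // andbT; apply/orP; left.
  by rewrite !mem_block in vc vgi; rewrite vc vgi.
Qed.

Lemma block_map_move i c : i \notin g c -> block_map (move_map g i (g c)).
Proof.
rewrite mem_block => ic; split => [v | u v]; rewrite /move_map.
- case: ifP => [viC | /norP [vi _]]; first by rewrite !inE.
  by case: ifP => [vgi | _]; rewrite ?inE ?vi ?vgi ?block_mem.
- case: ifP => [_ | /norP [vi vc]]; first by rewrite !inE => ->.
  case: ifP => vgi.
    rewrite !inE => /andP [ui ugi]; rewrite (negbTE ui) ugi /= !mem_block.
    by move: ugi; rewrite mem_block => /eqP ->; rewrite (negbTE ic).
  move=> /(block_eq gP) guv.
  have ui : u != i by apply: contraFN vgi => /eqP ui; rewrite mem_block -guv ui.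
  by rewrite (negbTE ui) !mem_block guv -!mem_block (negbTE vc) vgi.
Qed.

End BlockMaps.

Lemma ltr_frac_nat (R : numFieldType) (a b c d : nat) : 0 < b -> 0 < d ->
  ((a%:R / b%:R : R) < c%:R / d%:R)%R = (a * d < c * b).
Proof.
move=> b0 d0; rewrite ltr_pdivrMr ?ltr0n // mulrAC ltr_pdivlMr ?ltr0n //.
by rewrite -!natrM ltr_nat mulnC [c * b]mulnC.
Qed.

Lemma asym_irrefl (T : finType) (arc : rel T) : asymmetric arc -> forall v, ~~ arc v v.
Proof. by move=> asym v; apply/negP => a; move: (asym v v a); rewrite a. Qed.

Section Utility.
Variables (T : finType) (arc : rel T).
Local Open Scope ring_scope.

Lemma util_ge0 i (X : {set T}) : 0 <= util arc i X.
Proof. by rewrite /util divr_ge0 ?ler0n. Qed.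

Lemma util_eq0 i (X : {set T}) : {in X, forall j, ~~ arc i j} -> util arc i X = 0.
Proof.
move=> noarc; rewrite /util.
suff -> : [set j in X | arc i j] = set0 by rewrite cards0 mul0r.
by apply/setP => j; rewrite !inE; case: (boolP (j \in X)) => // /noarc /negPf.
Qed.

Lemma util_gt0P i (X : {set T}) :
  reflect (exists2 j, j \in X & arc i j) (0 < util arc i X).
Proof.
rewrite /util; apply: (iffP idP) => [pos | [j jX aij]].
  have /set0Pn [j] : [set j in X | arc i j] != set0.
    by apply: contraTneq pos => ->; rewrite cards0 mul0r ltxx.
  by rewrite inE => /andP [jX aij]; exists j.
by rewrite divr_gt0 // ltr0n; apply/card_gt0P; exists j; rewrite ?inE ?jX ?aij.
Qed.

Lemma util_le_setU1_no_arc i j (C : {set T}) :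
  i \notin C -> j \in C -> ~~ arc j i ->
  util arc j C <= util arc j (i |: C) -> {in C, forall k, ~~ arc j k}.
Proof.
move=> iC jC nji; rewrite /util.
have -> : [set k in i |: C | arc j k] = [set k in C | arc j k].
  apply/setP => k; rewrite !inE.
  by case: eqVneq => [-> | _]; rewrite ?(negbTE nji) ?andbF.
have C0 : (0 < #|C|)%N by apply/card_gt0P; exists j.
rewrite cardsU1 iC leNgt ltr_frac_nat // => /negP noarc k kC.
apply/negP => ajk; apply: noarc; rewrite ltn_mul2l add1n ltnSn andbT.
by apply/card_gt0P; exists k; rewrite inE kC.
Qed.

Definition tournament (X : {set T}) :=
  {in X &, forall u v, u != v -> arc u v || arc v u}.

Lemma tournament_set1 v : tournament [set v].
Proof. by move=> x y /set1P -> /set1P ->; rewrite eqxx. Qed.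

Lemma tournament_sub (X Y : {set T}) : X \subset Y -> tournament Y -> tournament X.
Proof. by move=> /subsetP XY tY u v /XY uY /XY vY; apply: tY. Qed.

Lemma tournament_setU1 i s (C : {set T}) :
  tournament C -> s \in C -> arc i s -> {in C, forall j, j != s -> arc j i} ->
  tournament (i |: C).
Proof.
move=> tC sC ais toi u v /setU1P [-> | uC] /setU1P [-> | vC] uv.
- by rewrite eqxx in uv.
- by have [-> | /(toi v vC) ->] := eqVneq v s; rewrite ?ais ?orbT.
- by have [-> | /(toi u uC) ->] := eqVneq u s; rewrite ?ais ?orbT.
- exact: tC.
Qed.

End Utility.

Section Potential.
Variables (T : finType) (arc : rel T).
Hypotheses (arc_asym : asymmetric arc) (arc_acyclic : acyclic arc).

Lemma acyclic_connect_arc u v : connect arc v u -> ~~ arc u v.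
Proof.
move=> /connectP [p vp ->]; apply/negP => a.
have := @arc_acyclic v (rcons p v); rewrite rcons_path vp a last_rcons eqxx.
by case: p {vp a} => [|x p] /(_ isT isT).
Qed.

Definition ancestors v := [set u | (u != v) && connect arc u v].

Definition depth v := #|ancestors v|.

Lemma depth_lt u v : arc u v -> depth u < depth v.
Proof.
move=> auv; apply/proper_card/properP; split.
  apply/subsetP => w; rewrite !inE => /andP [_ cwu].
  rewrite (connect_trans cwu (connect1 auv)) andbT.
  by apply: contraNneq (acyclic_connect_arc cwu) => ->.
exists u; rewrite !inE ?eqxx // connect1 // andbT.
by apply: contraTneq auv => ->; exact: acyclic_connect_arc (connect0 _ v).
Qed.

Lemma depth_lt_card v : depth v < #|T|.
Proof.
have T0 : 0 < #|T| by apply/card_gt0P; exists v.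
rewrite -(prednK T0) ltnS -(cardsC1 v).
by apply/subset_leq_card/subsetP => w; rewrite !inE => /andP [].
Qed.

Definition height (X : {set T}) := \max_(v in X) (depth v).+1.

Definition weight (X : {set T}) := 2 * #|T| * height X + #|X| ^ 2.

Definition potential (P : {set {set T}}) := \sum_(X in P) weight X.

Lemma height_subset (X Y : {set T}) : X \subset Y -> height X <= height Y.
Proof. by move=> /subsetP XY; apply/bigmax_leqP => v /XY; apply: leq_bigmax_cond. Qed.

Lemma height_setU1_le i s (C : {set T}) : s \in C -> arc i s -> height (i |: C) <= height C.
Proof.
move=> sC ais; apply/bigmax_leqP => v /setU1P [-> | vC]; last exact: leq_bigmax_cond.
exact: leq_trans (depth_lt ais) (ltnW (leq_bigmax_cond _ sC)).
Qed.

Lemma height_setD1_lt i (B : {set T}) : i \in B -> {in B :\ i, forall v, arc v i} ->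
  height (B :\ i) < height B.
Proof.
move=> iB toi; apply: leq_trans _ (leq_bigmax_cond _ iB); rewrite ltnS.
by apply/bigmax_leqP => v /toi; apply: depth_lt.
Qed.

Lemma weight_join_lt i s (B C : {set T}) :
  tournament arc B -> i \in B -> i \notin C -> s \in C -> arc i s ->
  {in C, forall j, j != s -> arc j i} ->
  (util arc i B < util arc i (i |: C))%R ->
  weight (B :\ i) + weight (i |: C) < weight B + weight C.
Proof.
move=> tourB iB iC sC ais toi Hi.
have hC := leq_mul (leqnn (2 * #|T|)) (height_setU1_le sC ais).
have cardB : #|B| = #|B :\ i|.+1 by rewrite (cardsD1 i B) iB.
have cardC : #|i |: C| = #|C|.+1 by rewrite cardsU1 iC.
have := max_card (i |: C); rewrite cardC => Cn.
rewrite /weight cardB cardC.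
case: (util_gt0P arc i B) => [[t tB ait] | noarc].
- have out_le1 : #|[set j in i |: C | arc i j]| <= 1.
    rewrite -(cards1 s); apply/subset_leq_card/subsetP => j; rewrite !inE.
    case/andP => /orP [/eqP -> | jC] aij.
      by rewrite (negbTE (asym_irrefl arc_asym i)) in aij.
    by apply: contraTT aij => js; apply: arc_asym; apply: toi.
  have out_gt0 : 0 < #|[set j in B | arc i j]|.
    by apply/card_gt0P; exists t; rewrite inE tB ait.
  move: Hi; rewrite /util ltr_frac_nat ?cardB ?cardC // => Hlt.
  have CB : #|C| < #|B :\ i|.
    have := leq_mul out_gt0 (leqnn #|C|.+1).
    have := leq_mul out_le1 (leqnn #|B :\ i|.+1); lia.
  have := leq_mul (leqnn (2 * #|T|)) (height_subset (subD1set B i)); nia.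
- have toi' : {in B :\ i, forall v, arc v i}.
    move=> v /setD1P [vi vB]; case/orP: (tourB v i vB iB vi) => // aiv.
    by case: noarc; exists v.
  have := leq_mul (leqnn (2 * #|T|)) (height_setD1_lt iB toi'); nia.
Qed.

Lemma IS_dev_join g P' :
  block_map g -> (forall v, tournament arc (g v)) -> IS_dev arc (partition_of g) P' ->
  exists i c s, P' = partition_of (move_map g i (g c)) /\
    [/\ i \notin g c, s \in g c, arc i s, {in g c, forall j, j != s -> arc j i} &
    (util arc i (g i) < util arc i (i |: g c))%R].
Proof.
move=> gP tour [i [C [HC [-> [Hi HCj]]]]].
rewrite pblock_partition_of // in HC Hi.
case: HC => [[/imsetP [c _ EC] cNi] | C0]; last first.
  have util_i0 : util arc i [set i] = 0%R.
    by apply: util_eq0 => j /set1P ->; apply: asym_irrefl.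
  by move: Hi; rewrite C0 setU0 util_i0 ltNge util_ge0.
subst C; have ic : i \notin g c by rewrite mem_block // eq_sym.
have /util_gt0P [s /setU1P [-> | sc] ais] := le_lt_trans (util_ge0 arc i (g i)) Hi.
  by rewrite (negbTE (asym_irrefl arc_asym i)) in ais.
have sink j : j \in g c -> ~~ arc j i -> {in g c, forall k, ~~ arc j k}.
  by move=> jc nji; apply: util_le_setU1_no_arc ic jc nji (HCj j jc).
exists i, c, s; split; first exact: move_partition_of.
split => // j jc js; apply: contraTT (tour c j s jc sc js) => nji.
by rewrite negb_or (sink j jc nji s sc) (sink s sc (arc_asym ais) j jc).
Qed.

Lemma IS_dev_potential_lt g P' :
  block_map g -> (forall v, tournament arc (g v)) -> IS_dev arc (partition_of g) P' ->
  exists g', [/\ block_map g', forall v, tournament arc (g' v), P' = partition_of g' &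
                potential P' < potential (partition_of g)].
Proof.
move=> gP tour /(IS_dev_join gP tour) [i [c [s [-> [ic sc ais toi Hi]]]]].
exists (move_map g i (g c)); split=> //.
- exact: block_map_move.
- move=> v; rewrite /move_map; case: ifP => _.
    exact: tournament_setU1 (tour c) sc ais toi.
  by case: ifP => _; [apply: tournament_sub (subD1set _ _) (tour i) | apply: tour].
- have BP : pblock (partition_of g) i \in partition_of g.
    by rewrite pblock_partition_of ?imset_f.
  have CP : g c \in partition_of g :\ pblock (partition_of g) i.
    rewrite pblock_partition_of // !inE imset_f // andbT.
    by apply: contraNneq ic => ->; apply: block_mem.
  have := sum_move_le weight BP CP; rewrite -move_partition_of // pblock_partition_of //.
  have := weight_join_lt (tour i) (block_mem gP i) ic sc ais toi Hi.
  rewrite /potential; lia.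
Qed.

Lemma IS_chain_length_le (f : nat -> {set {set T}}) m :
  f 0 = singleton_partition T -> (forall k, k < m -> IS_dev arc (f k) (f k.+1)) ->
  m <= potential (singleton_partition T).
Proof.
move=> f0 dev.
suff reach k : k <= m -> exists g, [/\ block_map g, forall v, tournament arc (g v),
    f k = partition_of g & potential (f k) + k <= potential (f 0)].
  by have [g [_ _ _]] := reach m (leqnn m); rewrite f0; lia.
elim: k => [_ | k IH km].
  exists (fun v => [set v]); split; rewrite ?addn0 //.
  - exact: block_map_set1.
  - exact: tournament_set1.
have [g [gP tour fk le_k]] := IH (ltnW km).
have := dev k km; rewrite fk.
move=> /(IS_dev_potential_lt gP tour) [g' [g'P tour' fk1 lt_k]].
by exists g'; split => //; rewrite fk in le_k; lia.
Qed.

Lemma potential_singleton_le : potential (singleton_partition T) <= 3 * #|T| ^ 4.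
Proof.
rewrite /potential big_imset /=; last by move=> u v _ _ /set1_inj.
apply: (@leq_trans (\sum_(v in T) (2 * #|T| * #|T| + 1))).
  apply: leq_sum => v _; rewrite /weight /height big_set1 cards1 leq_add2r leq_mul2l.
  by rewrite depth_lt_card orbT.
rewrite sum_nat_const; case: #|T| => // n; nia.
Qed.

End Potential.

Section Cycle.
Variables (T : finType) (arc : rel T).
Hypothesis arc_asym : asymmetric arc.

Definition pair_map (a b : T) v : {set T} :=
  if v \in [set a; b] then [set a; b] else [set v].

Lemma block_map_pair a b : block_map (pair_map a b).
Proof.
split=> [v | u v]; rewrite /pair_map; first by case: ifP; rewrite ?set11.
by case: ifP => [_ -> // | vab /set1P ->]; rewrite vab.
Qed.

Lemma IS_dev_pair_step a' a b : ~~ arc a a' -> arc a b -> a' != b ->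
  IS_dev arc (partition_of (pair_map a' a)) (partition_of (pair_map a b)).
Proof.
move=> naa' aab a'b.
have ab : a != b by apply: contraTneq aab => ->; apply: asym_irrefl.
set g := pair_map a' a; have gP : block_map g := block_map_pair a' a.
have gb : g b = [set b].
  by rewrite /g /pair_map !inE eq_sym (negbTE a'b) eq_sym (negbTE ab).
have ga : g a = [set a'; a] by rewrite /g /pair_map !inE eqxx orbT.
have agb : a \notin g b by rewrite gb inE.
exists a, (g b); split; [|split; [|split]].
- left; split; first exact: imset_f.
  by rewrite pblock_partition_of //; apply: contraNneq agb => ->; apply: block_mem.
- rewrite move_partition_of //; apply: eq_imset => v.
  rewrite /move_map ga gb /g /pair_map !inE.
  case: ifP => // /norP [va _]; rewrite (negbTE va) orbF.
  case: (eqVneq v a') va => [-> a'a | //]; apply/setP => z; rewrite !inE.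
  by case: eqVneq => [-> | _]; [rewrite a'a | case: eqP].
- rewrite pblock_partition_of // ga util_eq0; last first.
    by move=> j; rewrite !inE => /orP [/eqP -> | /eqP ->] //; apply: asym_irrefl.
  by apply/util_gt0P; exists b; rewrite // gb !inE eqxx orbT.
- move=> j; rewrite gb => /set1P ->.
  by rewrite [util _ _ [set b]]util_eq0 ?util_ge0 // => k /set1P ->; apply: asym_irrefl.
Qed.

(* At k = 0 the source is [pair_map (w 0) (w 0)], the singleton partition. *)
Lemma IS_dev_walk (w : nat -> T) : (forall k, arc (w k) (w k.+1)) ->
  forall k, IS_dev arc (partition_of (pair_map (w k.-1) (w k)))
                       (partition_of (pair_map (w k) (w k.+1))).
Proof.
move=> walk [|k]; apply: IS_dev_pair_step (walk _) _.
- exact: asym_irrefl.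
- by apply: contraTneq (walk 0) => ->; apply: asym_irrefl.
- exact: arc_asym (walk k).
- by apply: contraTneq (walk k.+1) => <-; apply: arc_asym (walk k).
Qed.

Lemma cycle_IS_dev_forever x p : p != [::] -> path arc x p -> last x p = x ->
  exists f : nat -> {set {set T}},
    f 0 = singleton_partition T /\ forall k, IS_dev arc (f k) (f k.+1).
Proof.
case: p => [// | y p] _ /= /andP [axy yp] lst.
have cyc : cycle arc (y :: p) by rewrite /= rcons_path yp lst axy.
pose w k := iter k (next (y :: p)) y.
have w_in k : w k \in y :: p.
  by elim: k => [|k]; rewrite ?mem_head // /w iterS mem_next.
have walk k : arc (w k) (w k.+1) by rewrite /w iterS; apply: next_cycle cyc (w_in k).
exists (fun k => partition_of (pair_map (w k.-1) (w k))).
split; last exact: IS_dev_walk.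
by apply: eq_imset => v; rewrite /pair_map setUid; case: ifP => // /set1P ->.
Qed.

End Cycle.

Theorem proposition5p5 :
  (forall (T : finType) (arc : rel T), asymmetric arc ->
     ((~ exists f : nat -> {set {set T}},
           f 0 = singleton_partition T /\
           forall k, IS_dev arc (f k) (f k.+1))
      <-> acyclic arc))
  /\
  (exists c : nat, forall (n : nat) (arc : rel 'I_n),
     asymmetric arc -> acyclic arc ->
     forall s : seq {set {set 'I_n}}, IS_seq arc s -> size s <= c * n ^ 4).
Proof.
split=> [T arc asym | ].
  split=> [no_forever x p p0 xp | acyc [f [f0 dev]]].
    apply/negP => /eqP px; apply: no_forever.
    exact: cycle_IS_dev_forever p0 xp px.
  have := IS_chain_length_le asym acyc (m := (potential arc (singleton_partition T)).+1) f0.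
  by rewrite ltnn => /(_ (fun k _ => dev k)).
exists 3 => n arc asym acyc s devs.
have := IS_chain_length_le asym acyc (m := size s)
  (erefl : _ = singleton_partition 'I_n) devs.
by move/leq_trans; apply; rewrite -{3}(card_ord n); apply: potential_singleton_le.
Qed.
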